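(* The function $d\mapsto\sigma(d,n+1)$ is concave for $1\le d\le n+1$, i.e. $\sigma(d+1,n+1)-\sigma(d,n+1)\le\sigma(d,n+1)-\sigma(d-1,n+1)$ for all integers $1<d<n+1$.
   Context: Let $x_0\le x_1\le\cdots\le x_{n+1}$ be real numbers, and write $\{x\}=x-\lfloor x\rfloor$. Let $\pi=(\pi_0,\dots,\pi_{n+1})$ be the permutation of $\{0,1,\dots,n+1\}$ such that for all $0\le i<j\le n+1$, $\pi_i>\pi_j$ if and only if $(\{x_i\},-x_i,i)<(\{x_j\},-x_j,j)$ in lexicographic order. For a sequence of indices $s_0<s_1<\cdots<s_k$, a drop is a consecutive pair $(s_{h-1},s_h)$ with $\pi_{s_{h-1}}>\pi_{s_h}$. For integers $0\le d\le i\le n+1$, let $\sigma(d,i)$ be the maximum $h$ such that there exists a sequence of $h+2$ indices $0=s_0<s_1<\cdots<s_{h+1}=i$ with at most $d$ drops, and $\sigma(d,i)=-\infty$ if no such sequence exists. *)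

From HB Require Import structures.
From mathcomp Require Import all_boot all_order all_algebra.
From mathcomp Require Import fingroup perm reals.
Set Implicit Arguments. Unset Strict Implicit. Unset Printing Implicit Defensive.
Import Order.TTheory GRing.Theory Num.Theory.
Local Open Scope ring_scope.

(* Indices 0..N-1 are 'I_N; in the paper N = n+2 (indices 0..n+1). *)

Definition fract (R : realType) (r : R) : R := r - (Num.floor r)%:~R.

Definition key_lt (R : realType) (N : nat) (x : 'I_N -> R) (i j : 'I_N) : bool :=
  (fract (x i) < fract (x j)) ||
  ((fract (x i) == fract (x j)) &&
   ((- x i < - x j) || ((- x i == - x j) && (val i < val j)%N))).

Definition is_pi (R : realType) (N : nat) (x : 'I_N -> R) (p : {perm 'I_N}) : Prop :=
  forall i j : 'I_N, (val i < val j)%N ->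
    ((val (p j) < val (p i))%N = key_lt x i j).

Definition drops (N : nat) (p : {perm 'I_N}) (s : seq 'I_N) : nat :=
  count (fun ab : 'I_N * 'I_N => (val (p ab.2) < val (p ab.1))%N) (zip s (behead s)).

Definition admissible (N : nat) (p : {perm 'I_N}) (d i h : nat)
    (t : (h.+2).-tuple 'I_N) : bool :=
  [&& head 1%N (map val t) == 0%N, last 0%N (map val t) == i,
      sorted ltn (map val t) & (drops p t <= d)%N].

Definition achievable (N : nat) (p : {perm 'I_N}) (d i h : nat) : bool :=
  [exists t : (h.+2).-tuple 'I_N, admissible p d i t].

(* sigma(d,i): Some (max h) if some h is achievable, None (= -infinity) otherwise.
   Any achievable h satisfies h + 2 <= N (distinct indices), so h < N.+1
   loses nothing. *)
Definition sigma (N : nat) (p : {perm 'I_N}) (d i : nat) : option nat :=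
  if [exists h : 'I_N.+1, achievable p d i h]
  then Some (\max_(h < N.+1 | achievable p d i h) val h)
  else None.

From HB Require Import structures.
From mathcomp Require Import all_boot all_order all_algebra.
From mathcomp Require Import fingroup perm reals.
From mathcomp Require Import zify.
Import Order.TTheory GRing.Theory Num.Theory.
Set Implicit Arguments. Unset Strict Implicit. Unset Printing Implicit Defensive.

(* Call the number of drops met so far along an increasing route the level of
   an index; then u |-> level u * N + p u is strictly increasing along the
   route, and conversely any strictly increasing key of this form bounds the
   number of drops by its rise in level.  Take longest routes A with at most
   d-1 drops and C with at most d+1 drops; if C has more than d drops, lift
   the key of A by one level.  It then starts above the key of C and ends at
   or below it, so the two keys cross at some index c; exchanging the parts of A
   and C beyond c gives two routes of the same total length with at most d
   drops each, whence sigma(d-1) + sigma(d+1) <= 2 sigma(d). *)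

Lemma last_filter_cons (T : Type) (a : pred T) x s y :
  a (last x s) -> last y (filter a (x :: s)) = last x s.
Proof.
elim: s x y => [|z s IH] x y /=; first by move->.
by move=> azs; case: (a x); rewrite /= IH.
Qed.

Section Routes.
Variable N : nat.
Local Notation ltI := (fun u v : 'I_N => u < v).

Definition increasing_on (f : 'I_N -> nat) (s : seq 'I_N) :=
  {in s &, forall u v : 'I_N, u < v -> f u < f v}.

Definition route (z w : 'I_N) (s : seq 'I_N) := pairwise ltI (z :: s) /\ last z s = w.

Definition splice (c : nat) (S T : seq 'I_N) :=
  [seq u : 'I_N <- S | u <= c] ++ [seq u : 'I_N <- T | c < u].

Lemma increasing_on_leq f s :
  increasing_on f s -> {in s &, forall u v : 'I_N, u <= v -> f u <= f v}.
Proof.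
move=> incf u v us vs; rewrite leq_eqVlt => /orP[/eqP/val_inj -> //|uv].
exact/ltnW/incf.
Qed.

Lemma pairwise_splice c S T :
  pairwise ltI S -> pairwise ltI T -> pairwise ltI (splice c S T).
Proof.
move=> pS pT; rewrite pairwise_cat !pairwise_filter ?andbT //.
apply/allrelP => u v; rewrite !mem_filter => /andP[uc _] /andP[cv _].
exact: leq_ltn_trans cv.
Qed.

Lemma increasing_splice c S T f g :
  increasing_on f S -> increasing_on g T ->
  {in S & T, forall u v : 'I_N, u <= c < v -> f u < g v} ->
  increasing_on (fun u => if u <= c then f u else g u) (splice c S T).
Proof.
move=> incf incg fg u v; rewrite !mem_cat !mem_filter.
case/orP=> /andP[uc uS]; case/orP=> /andP[vc vT] uv.
- by rewrite uc vc; apply: incf.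
- by rewrite uc (leqNgt v) vc; apply: fg; rewrite ?uc.
- by have := leq_ltn_trans vc (ltn_trans uc uv); rewrite ltnn.
- by rewrite (leqNgt u) (leqNgt v) uc vc; apply: incg.
Qed.

Lemma splice_last c S T (z y : 'I_N) :
  c < last z T -> last y (splice c S (z :: T)) = last z T.
Proof. by move=> cT; rewrite last_cat last_filter_cons. Qed.

Lemma size_splice c (S T : seq 'I_N) :
  size (splice c S T) + size (splice c T S) = size S + size T.
Proof.
have split s :
    count (fun u : 'I_N => u <= c) s + count (fun u : 'I_N => c < u) s = size s.
  rewrite -(count_predC (fun u : 'I_N => u <= c)); congr (_ + _).
  by apply: eq_count => u; rewrite /= -ltnNge.
rewrite !size_cat !size_filter -(split S) -(split T); lia.
Qed.

Lemma route_splice (z w : 'I_N) c sS sT f g :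
  route z w sS -> route z w sT -> z <= c < w ->
  increasing_on f (z :: sS) -> increasing_on g (z :: sT) ->
  {in z :: sS & z :: sT, forall u v : 'I_N, u <= c < v -> f u < g v} ->
  route z w (splice c sS sT) /\
  increasing_on (fun u => if u <= c then f u else g u) (z :: splice c sS sT).
Proof.
move=> [pS _] [pT lT] /andP[zc cw] incf incg fg.
have e : z :: splice c sS sT = splice c (z :: sS) (z :: sT).
  by rewrite /splice /= zc ltnNge zc.
split; last by rewrite e; apply: increasing_splice.
split; first by rewrite e; apply: pairwise_splice.
by rewrite -[last z _]/(last z (z :: _)) e splice_last lT.
Qed.

Lemma exists_cut S T f g (z w : 'I_N) :
  increasing_on f S -> increasing_on g T -> (forall u v, f u = g v -> u = v) ->
  z \in S -> z \in T -> {in S, forall u : 'I_N, z <= u} -> w \in S -> w \in T ->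
  f z < g z -> g w <= f w ->
  exists2 c, z <= c < w &
    {in S & T, forall u v : 'I_N, u <= c < v -> f u < g v} /\
    {in T & S, forall u v : 'I_N, u <= c < v -> g u < f v}.
Proof.
move=> incf incg fg_inj zS zT zmin wS wT fgz gfw.
pose P t :=
  has (fun u : 'I_N => (u <= t) && all (fun v : 'I_N => (v <= t) ==> (g v <= f u)) T) S.
have Pw : P w.
  apply/hasP; exists w; rewrite // leqnn; apply/allP => v vT; apply/implyP => vw.
  exact: leq_trans (increasing_on_leq incg vT wT vw) gfw.
case: (ex_minnP (ex_intro P w Pw)) => t0 /hasP[u0 u0S /andP[u0t0 /allP u0max]] t0min.
have below t : ~~ P t -> forall u, u \in S -> u <= t ->
    exists2 v, v \in T & (v <= t) && (f u < g v).
  move=> /hasPn nPt u uS ut; have := nPt u uS; rewrite ut /= => /allPn[v vT].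
  by rewrite negb_imply -ltnNge; exists v.
have zt0 : z < t0.
  rewrite ltnNge; apply/negP => t0z.
  have u0z : u0 = z by apply/val_inj/eqP; rewrite eqn_leq zmin // (leq_trans u0t0 t0z).
  by have := u0max z zT; rewrite -{1}u0z u0t0 u0z /= leqNgt fgz.
have t0_gt0 : 0 < t0 := leq_ltn_trans (leq0n z) zt0.
have nPc : ~~ P t0.-1 by apply/negP => /t0min; rewrite leqNgt ltn_predL t0_gt0.
have u0c : u0 = t0 :> nat.
  apply/eqP; rewrite eqn_leq u0t0 -(prednK t0_gt0) ltnNge.
  apply/negP => u0c; have [v vT /andP[vc fgv]] := below _ nPc u0 u0S u0c.
  by have := u0max v vT; rewrite (leq_trans vc (leq_pred t0)) /= leqNgt fgv.
exists t0.-1; first by have := t0min w Pw; rewrite -ltnS prednK //; lia.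
split=> [u v uS vT /andP[uc cv] | u v uT vS /andP[uc cv]].
  have [v' v'T /andP[v'c fgv']] := below _ nPc u uS uc.
  by apply: ltn_trans fgv' (incg _ _ v'T vT (leq_ltn_trans v'c cv)).
have gu : g u <= f u0 by have := u0max u uT; rewrite (leq_trans uc (leq_pred t0)).
have gu' : g u != f u0.
  by apply/eqP => /esym/fg_inj u0u; move: uc; rewrite -u0u u0c leqNgt ltn_predL t0_gt0.
apply: (@leq_trans (f u0)); first by rewrite ltn_neqAle gu' gu.
by apply: (increasing_on_leq incf u0S vS); rewrite u0c -(prednK t0_gt0).
Qed.

Lemma sorted_val_pairwise (s : seq 'I_N) : sorted ltn (map val s) = pairwise ltI s.
Proof. by rewrite sorted_map; apply: sorted_pairwise => y x z; apply: ltn_trans. Qed.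

Lemma pairwise_size (s : seq 'I_N) : pairwise ltI s -> size s <= N.
Proof.
move=> ps; have un : uniq s := pairwise_uniq (fun u : 'I_N => ltnn u) ps.
by rewrite -(card_uniqP un) -[leqRHS]card_ord max_card.
Qed.

Section Keys.
Variable p : {perm 'I_N}.

(* A key stores the level of u as f u %/ N. *)
Definition is_key (f : 'I_N -> nat) := forall u, f u %% N = p u.

Lemma key_level_lt f (u v : 'I_N) :
  is_key f -> f u < f v -> (p v < p u) + f u %/ N <= f v %/ N.
Proof.
move=> kf; rewrite {1}(divn_eq (f u) N) {1}(divn_eq (f v) N) !kf.
move: (f u %/ N) (f v %/ N) (ltn_ord (p u)) (ltn_ord (p v)) => a b pu pv.
by case: ltnP => /=; nia.
Qed.

Lemma key_inj f g (u v : 'I_N) : is_key f -> is_key g -> f u = g v -> u = v.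
Proof. by move=> kf kg fg; apply/(@perm_inj _ p)/ord_inj; rewrite -kf -kg fg. Qed.

Lemma drops_cons2 (x y : 'I_N) s :
  drops p [:: x, y & s] = (p y < p x) + drops p (y :: s).
Proof. by []. Qed.

Lemma drops_key_bound f z s :
  is_key f -> pairwise ltI (z :: s) -> increasing_on f (z :: s) ->
  drops p (z :: s) + f z %/ N <= f (last z s) %/ N.
Proof.
move=> kf; elim: s z => [|y s IH] z; first by rewrite add0n.
rewrite pairwise_cons => /andP[/andP[zy _] pys] incf.
have incf' : increasing_on f (y :: s).
  by move=> u v us vs; apply: incf; rewrite inE ?us ?vs orbT.
have yzs : y \in [:: z, y & s] by rewrite !inE eqxx orbT.
have := IH y pys incf'; have := key_level_lt kf (incf z y (mem_head _ _) yzs zy).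
rewrite drops_cons2 /=; lia.
Qed.

Lemma exists_tight_key z s : pairwise ltI (z :: s) ->
  exists2 f, is_key f &
    [/\ f z = p z, increasing_on f (z :: s) & f (last z s) %/ N <= drops p (z :: s)].
Proof.
have N_gt0 : 0 < N := leq_ltn_trans (leq0n z) (ltn_ord z).
elim: s z => [|y s IH] z.
  move=> _; exists (fun u => nat_of_ord (p u)); first by move=> u; apply: modn_small.
  split=> //; last by rewrite divn_small.
  by move=> u v; rewrite !inE => /eqP-> /eqP->; rewrite ltnn.
rewrite pairwise_cons => /andP[zys pys].
have z_lt u : u \in y :: s -> z < u by move=> us; apply: (allP zys).
have [f kf [fy incf fs]] := IH y pys.
pose c := (p y < p z) : nat.
exists (fun u => if u == z then nat_of_ord (p z) else c * N + f u).
  by move=> u; case: eqP => [->|_]; rewrite ?modnMDl ?kf ?modn_small.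
split; first by rewrite eqxx.
- have y_le v : v \in y :: s -> y <= v.
    case/predU1P=> [->//|vs]; apply: ltnW.
    by move: pys; rewrite pairwise_cons => /andP[/allP ys _]; apply: ys.
  have tail u : u \in z :: y :: s -> u != z -> u \in y :: s.
    by case/predU1P=> [->|//]; rewrite eqxx.
  move=> u v hu hv uv.
  case: (eqVneq u z) => [uz|uz]; case: (eqVneq v z) => [vz|vz].
  + by move: uv; rewrite uz vz ltnn.
  + have vs := tail v hv vz; have := increasing_on_leq incf (mem_head y s) vs (y_le v vs).
    rewrite fy /c; case: (ltnP (p y) (p z)) => pyz.
      by have := ltn_ord (p z); lia.
    have : p z != p y :> nat.
      by apply: contraTneq (z_lt y (mem_head y s)) => /ord_inj/perm_inj ->; rewrite ltnn.
    lia.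
  + by have := ltn_trans (z_lt u (tail u hu uz)) uv; rewrite vz ltnn.
  + by rewrite ltn_add2l; apply: incf => //; apply: tail.
- have /negbTE -> : last y s != z.
    by apply: contraTneq (z_lt _ (mem_last y s)) => ->; rewrite ltnn.
  by rewrite /= divnMDl // drops_cons2 leq_add2l.
Qed.

Lemma route_exchange z w sA sC :
  route z w sA -> route z w sC -> drops p (z :: sA) + 2 <= drops p (z :: sC) ->
  exists sX sY, [/\ route z w sX, route z w sY,
    drops p (z :: sX) <= (drops p (z :: sA)).+1,
    (drops p (z :: sY)).+1 <= drops p (z :: sC) &
    size sX + size sY = size sA + size sC].
Proof.
move=> rA rC dAC; have [pA lA] := rA; have [pC lC] := rC.
have N_gt0 : 0 < N := leq_ltn_trans (leq0n z) (ltn_ord z).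
have [fA kA [fAz incA fAw]] := exists_tight_key pA.
have [f kf [fz incf fw]] := exists_tight_key pC.
pose g u := fA u + N.
have kg : is_key g by move=> u; rewrite /g modnDr.
have incg : increasing_on g (z :: sA).
  by move=> u v hu hv uv; rewrite ltn_add2r; apply: incA.
have g_level u : g u %/ N = (fA u %/ N).+1 by rewrite /g divnDr // divnn N_gt0 addn1.
have f_level : drops p (z :: sC) <= f w %/ N.
  by have := drops_key_bound kf pC incf; rewrite lC; apply: leq_trans; apply: leq_addr.
rewrite lA in fAw; rewrite lC in fw.
have gfw : g w <= f w.
  rewrite leqNgt; apply: contraTN f_level => /ltnW/(leq_div2r N).
  by rewrite g_level -ltnNge; lia.
have fgz : f z < g z by rewrite /g fz fAz; lia.
have zmin : {in z :: sC, forall u : 'I_N, z <= u}.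
  move=> u /predU1P[->//|us]; apply: ltnW.
  by move: pC; rewrite pairwise_cons => /andP[/allP zs _]; apply: zs.
have wC : w \in z :: sC by rewrite -lC mem_last.
have wA : w \in z :: sA by rewrite -lA mem_last.
have [c /andP[zc cw] [fg gf]] := exists_cut incf incg (fun u v => key_inj kf kg)
  (mem_head z sC) (mem_head z sA) zmin wC wA fgz gfw.
have zcw : z <= c < w by rewrite zc cw.
have [rX incX] := route_splice rC rA zcw incf incg fg.
have [rY incY] := route_splice rA rC zcw incg incf gf.
have kX : is_key (fun u : 'I_N => if u <= c then f u else g u) by move=> u; case: ifP.
have kY : is_key (fun u : 'I_N => if u <= c then g u else f u) by move=> u; case: ifP.
have := drops_key_bound kX rX.1 incX; have := drops_key_bound kY rY.1 incY.
rewrite rX.2 rY.2 zc (leqNgt w) cw /= !g_level fz fAz !(divn_small (ltn_ord (p z))).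
exists (splice c sC sA), (splice c sA sC); split=> //; try lia.
by rewrite addnC size_splice.
Qed.

Section Sigma.
Variable w : 'I_N.
Hypothesis w_gt0 : 0 < w.

Lemma achievable_route D h : achievable p D w h <->
  exists (z : 'I_N) s,
    [/\ z = 0 :> nat, route z w s, drops p (z :: s) <= D & size s = h.+1].
Proof.
split.
  case/existsP=> -[[|z s] sz] //; rewrite /admissible /= => /and4P[/eqP z0 ls ps ds].
  exists z, s; split=> //; last by case/eqP: sz.
  split; first by rewrite -sorted_val_pairwise.
  by apply: val_inj; apply/eqP; rewrite -last_map.
case=> z [s [z0 [ps ls] ds sz]]; apply/existsP.
have szt : size (z :: s) == h.+2 by rewrite /= sz.
exists (Tuple szt); rewrite /admissible sorted_val_pairwise ps ds /=.
by rewrite -[last _ _]/(last (val z) (map val s)) last_map ls z0 !eqxx.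
Qed.

Lemma achievable0 D : 0 < D -> achievable p D w 0.
Proof.
move=> D_gt0; apply/achievable_route.
exists (Ordinal (ltn_trans w_gt0 (ltn_ord w))), [:: w]; split=> //.
  by split=> //=; rewrite w_gt0.
by rewrite drops_cons2; case: (_ < _).
Qed.

Definition max_achievable D := \max_(h < N.+1 | achievable p D w h) val h.

Lemma sigma_max_achievable D : 0 < D -> sigma p D w = Some (max_achievable D).
Proof.
by move=> D_gt0; rewrite /sigma ifT //; apply/existsP; exists ord0; apply: achievable0.
Qed.

Lemma achievable_max D : 0 < D -> achievable p D w (max_achievable D).
Proof.
move=> D_gt0; rewrite /max_achievable (bigop.bigmax_eq_arg ord0); last exact: achievable0.
by case: arg_maxnP => //; apply: achievable0.
Qed.

Lemma leq_max_achievable D h : achievable p D w h -> h <= max_achievable D.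
Proof.
move=> ah; have [z [s [_ [ps _] _ sz]]] := (achievable_route D h).1 ah.
have hN : h < N.+1 by have := pairwise_size ps; rewrite /= sz; lia.
exact: (@leq_bigmax_cond _ _ (fun i : 'I_N.+1 => val i) (Ordinal hN)).
Qed.

Lemma exists_route_max D : 0 < D -> exists (z : 'I_N) s,
  [/\ z = 0 :> nat, route z w s, drops p (z :: s) <= D & size s = (max_achievable D).+1].
Proof. by move=> D_gt0; apply/achievable_route/achievable_max. Qed.

Lemma route_size_le D (z : 'I_N) s :
  z = 0 :> nat -> route z w s -> drops p (z :: s) <= D -> size s <= (max_achievable D).+1.
Proof.
case: s => [|y s] z0 rs ds; first by move: w_gt0; rewrite -rs.2 z0.
by rewrite ltnS; apply/leq_max_achievable/achievable_route; exists z, (y :: s).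
Qed.

Lemma max_achievable_concave D : 0 < D ->
  max_achievable D + max_achievable D.+2 <= 2 * max_achievable D.+1.
Proof.
move=> D_gt0.
have [z [sA [z0 rA dA szA]]] := exists_route_max D_gt0.
have [z' [sC [z'0 rC dC szC]]] := exists_route_max (ltn0Sn D.+1).
have ez : z' = z by apply: ord_inj; rewrite z0 z'0.
subst z'.
have leA := route_size_le z0 rA (leq_trans dA (leqnSn D)).
case: (leqP (drops p (z :: sC)) D.+1) => dC'.
  by have := route_size_le z0 rC dC'; lia.
have dAC : drops p (z :: sA) + 2 <= drops p (z :: sC) by lia.
have [sX [sY [rX rY dX dY sXY]]] := route_exchange rA rC dAC.
have leX := route_size_le (D := D.+1) z0 rX ltac:(lia).
have leY := route_size_le (D := D.+1) z0 rY ltac:(lia).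
lia.
Qed.

End Sigma.

End Keys.
End Routes.

Theorem lemma2 (R : realType) (n : nat) (x : 'I_n.+2 -> R)
  (hx : forall i j : 'I_n.+2, (val i <= val j)%N -> (x i <= x j)%R)
  (p : {perm 'I_n.+2}) (hp : is_pi x p)
  (d : nat) (hd1 : (1 < d)%N) (hd2 : (d < n.+1)%N) :
  exists a b c : nat,
    [/\ sigma p d.-1 n.+1 = Some a, sigma p d n.+1 = Some b,
        sigma p d.+1 n.+1 = Some c &
        (c%:Z - b%:Z <= b%:Z - a%:Z)%R].
Proof.
case: d hd1 hd2 => [|[|D]] // _ _.
have w_gt0 : 0 < @ord_max n.+1 by [].
exists (max_achievable p ord_max D.+1), (max_achievable p ord_max D.+2),
  (max_achievable p ord_max D.+3).
split=> /=; try exact: (sigma_max_achievable p w_gt0).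
by have := max_achievable_concave p w_gt0 (ltn0Sn D); lia.
Qed.
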